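(* Let $\Lambda$ be a subshift over a finite alphabet $\Sigma$. Then its canonical pair $(\mathfrak L^-_\Lambda,\mathfrak L^+_\Lambda)$ is a $\lambda$-graph bisystem over the common alphabet $\Sigma$ which satisfies FPCC, and the subshift it presents (the unique subshift whose set of nonempty admissible words is $W_{\mathfrak L_\Lambda^+}=W_{\mathfrak L_\Lambda^-}$) is $\Lambda$ itself.
   Context: Subshift: nonempty closed $\Lambda\subset\Sigma^{\mathbb Z}$ with $\sigma(\Lambda)=\Lambda$, $\sigma((x_n))=(x_{n+1})$. Canonical pair: for integers $k<l$ and $x\in\Lambda$, $W_{k,l}(x)$ is the set of words $(\mu_{k+1},\dots,\mu_{l-1})\in\Sigma^{l-k-1}$ such that the sequence equal to $x_n$ for $n\le k$ and $n\ge l$ and to $\mu_n$ for $k<n<l$ lies in $\Lambda$. Write $[x]_{k,l}$ for the class of $x$ under $x\sim z\iff W_{k,l}(x)=W_{k,l}(z)$ and $\Omega^c_{k,l}$ for the (finite) set of classes; $\Omega^c_{-1,0}$ and $\Omega^c_{0,1}$ are singletons. Put $V_l:=\Omega^c_{-1,l}$ ($l\ge0$), and let $\theta_l:\Omega^c_{-l,1}\to\Omega^c_{-1,l}$ be the bijection $[x]_{-l,1}\mapsto[\sigma^{1-l}(x)]_{-1,l}$. $E^+_{l,l+1}$: for $u\in V_l$, $v\in V_{l+1}$, $\alpha\in\Sigma$ there is exactly one edge from $u$ to $v$ labeled $\alpha$ iff some $y\in\Lambda$ has $y_l=\alpha$, $[y]_{-1,l}=u$, $[y]_{-1,l+1}=v$,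 and no edge otherwise. $E^-_{l+1,l}$: for $v\in V_{l+1}$, $u\in V_l$, $\beta\in\Sigma$ there is exactly one edge from $v$ to $u$ labeled $\beta$ iff some $y\in\Lambda$ has $y_{-l}=\beta$, $\theta_{l+1}([y]_{-(l+1),1})=v$, $\theta_l([y]_{-l,1})=u$. $\mathfrak L^\pm_\Lambda=(V,E^\pm,\lambda^\pm)$ with the labels just described. $\lambda$-graph bisystem over $\Sigma^\pm$: vertex set $V=\bigsqcup_{l\ge0}V_l$, $V_l$ finite nonempty; edge sets $E^-=\bigsqcup E^-_{l+1,l}$ (edges from $V_{l+1}$ to $V_l$) and $E^+=\bigsqcup E^+_{l,l+1}$ (edges from $V_l$ to $V_{l+1}$), labelings $\lambda^\pm:E^\pm\to\Sigma^\pm$, with: (1) every $v\in V_l$, $l\ge1$, is terminal of an edge of $E^-_{l+1,l}$, source of an edge of $E^-_{l,l-1}$, source of an edge of $E^+_{l,l+1}$, terminal of an edge of $E^+_{l-1,l}$; each $v\in V_0$ is terminal of an edge of $E^-_{1,0}$ and source of one of $E^+_{0,1}$; (2) $\lambda^-$ right-resolving (same source and label implies same edge), $\lambda^+$ left-resolving (same terminal and label implies same edge); (3) local property: for $u\in V_l,v\in V_{l+2}$ a label-preserving bijection between $\{(e^-,e^+)\in E^-_{l+1,l}\times E^+_{l+1,l+2}:t(e^-)=u,s(e^-)=s(e^+),t(e^+)=v\}$ and $\{(f^+,f^-)\in E^+_{l,l+1}\times E^-_{l+2,l+1}:s(f^+)=u,t(f^+)=t(f^-),s(f^-)=v\}$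 (matching $\lambda^-$ of the $E^-$ components and $\lambda^+$ of the $E^+$ components). For $u\in V_l$: $F(u)$ = words $(\lambda^-(f_l),\dots,\lambda^-(f_1))$ along paths $f_k\in E^-_{k,k-1}$ from $u$ down to $V_0$; $P(u)$ = words $(\lambda^+(e_1),\dots,\lambda^+(e_l))$ along paths $e_k\in E^+_{k-1,k}$ from $V_0$ to $u$. FPCC: $|V_0|=1$, $\Sigma^-=\Sigma^+$, $F(u)=P(u)$ for all $u\in V_l,l\ge1$. $W_{\mathfrak L^+}$ (resp. $W_{\mathfrak L^-}$) is the set of label words of finite paths in $\mathfrak L^+$ (resp. in $\mathfrak L^-$, read in the direction of the edges). *)

From Stdlib Require Import ZArith ClassicalEpsilon.
From mathcomp Require Import all_boot.
Set Implicit Arguments. Unset Strict Implicit. Unset Printing Implicit Defensive.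

Definition classb (P : Prop) : bool :=
  if excluded_middle_informative P then true else false.

Section Subshift.
Variable Sigma : finType.
Definition zseq := Z -> Sigma.

Definition shiftZ (m : Z) (x : zseq) : zseq := fun n => x (n + m)%Z.
Definition shift (x : zseq) : zseq := shiftZ 1 x.

(* closed in the product topology of the discrete space Sigma *)
Definition closed_set (L : zseq -> Prop) : Prop :=
  forall x : zseq,
    (forall N : nat, exists y, L y /\ forall n : Z, (Z.abs n <= Z.of_nat N)%Z -> y n = x n) ->
    L x.

Definition is_subshift (L : zseq -> Prop) : Prop :=
  (exists x, L x) /\ closed_set L /\
  (forall x, L x -> L (shift x)) /\ (forall y, L y -> exists x, L x /\ shift x = y).

Definition admissible (L : zseq -> Prop) (w : seq Sigma) : Prop :=
  w <> [::] /\ exists x, L x /\ exists n : Z,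
    forall i : nat, (i < size w)%N -> x (n + Z.of_nat i)%Z = nth (x n) w i.

Definition fillZ (x : zseq) (k : Z) (n : nat) (t : n.-tuple Sigma) : zseq :=
  fun m => if (k <? m)%Z && (m <? k + Z.of_nat n + 1)%Z
           then nth (x m) (val t) (Z.to_nat (m - k - 1)) else x m.

(* Wset L k n x = W_{k,l}(x) with l = k + n + 1 *)
Definition Wset (L : zseq -> Prop) (k : Z) (n : nat) (x : zseq) : {set n.-tuple Sigma} :=
  [set t : n.-tuple Sigma | classb (L (fillZ x k t))].

(* Omega^c_{-1,l}: a class [x]_{-1,l} is represented by the set W_{-1,l}(x) that determines it *)
Definition canV (L : zseq -> Prop) (l : nat) : finType :=
  {S : {set l.-tuple Sigma} | classb (exists x, L x /\ Wset L (-1) l x = S)}.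
End Subshift.

(* Edges are represented by labeled triples (source, label, terminal); by the resolving
   conditions an edge is determined by such a triple. *)
Record LGB (Sm Sp : Type) := mkLGB {
  V : nat -> finType;
  Em : forall l, V l.+1 -> Sm -> V l -> Prop;
  Ep : forall l, V l -> Sp -> V l.+1 -> Prop
}.
Arguments V {Sm Sp}. Arguments Em {Sm Sp}. Arguments Ep {Sm Sp}.

Section LGBdefs.
Variables Sm Sp : Type.
Variable G : LGB Sm Sp.

Definition local_pairs_L (l : nat) (u : V G l) (v : V G l.+2) :=
  {p : V G l.+1 * Sm * Sp | Em G l p.1.1 p.1.2 u /\ Ep G l.+1 p.1.1 p.2 v}.
Definition local_pairs_R (l : nat) (u : V G l) (v : V G l.+2) :=
  {q : V G l.+1 * Sp * Sm | Ep G l u q.1.2 q.1.1 /\ Em G l.+1 v q.2 q.1.1}.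

Definition is_lambda_graph_bisystem : Prop :=
  (forall l, exists v : V G l, True) /\
  (forall l (v : V G l.+1),
     (exists w b, Em G l.+1 w b v) /\ (exists b u, Em G l v b u) /\
     (exists a w, Ep G l.+1 v a w) /\ (exists u a, Ep G l u a v)) /\
  (forall v : V G 0, (exists w b, Em G 0 w b v) /\ (exists a w, Ep G 0 v a w)) /\
  (forall l (v : V G l.+1) b (u1 u2 : V G l), Em G l v b u1 -> Em G l v b u2 -> u1 = u2) /\
  (forall l (v : V G l.+1) a (u1 u2 : V G l), Ep G l u1 a v -> Ep G l u2 a v -> u1 = u2) /\
  (forall l (u : V G l) (v : V G l.+2),
     exists phi : local_pairs_L u v -> local_pairs_R u v,
       bijective phi /\
       forall p, (proj1_sig (phi p)).2 = (proj1_sig p).1.2 /\ (proj1_sig (phi p)).1.2 = (proj1_sig p).2).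

Fixpoint Fw (l : nat) : V G l -> seq Sm -> Prop :=
  match l with
  | 0 => fun _ w => w = [::]
  | l'.+1 => fun u w => exists b (u' : V G l') w', Em G l' u b u' /\ Fw u' w' /\ w = b :: w'
  end.

Fixpoint Pw (l : nat) : V G l -> seq Sp -> Prop :=
  match l with
  | 0 => fun _ w => w = [::]
  | l'.+1 => fun u w => exists (u' : V G l') a w', Ep G l' u' a u /\ Pw u' w' /\ w = rcons w' a
  end.

Fixpoint pathP (w : seq Sp) (l : nat) (u : V G l) : Prop :=
  match w with
  | [::] => True
  | a :: w' => exists v : V G l.+1, Ep G l u a v /\ pathP w' v
  end.

Fixpoint pathM (w : seq Sm) (l : nat) : V G l -> Prop :=
  match w, l with
  | [::], _ => fun _ => True
  | _ :: _, 0 => fun _ => False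
  | b :: w', l'.+1 => fun u => exists v : V G l', Em G l' u b v /\ pathM w' v
  end.

Definition W_Lp (w : seq Sp) : Prop := w <> [::] /\ exists l (u : V G l), pathP w u.
Definition W_Lm (w : seq Sm) : Prop := w <> [::] /\ exists l (u : V G l), pathM w u.
End LGBdefs.

Definition FPCC (S : Type) (G : LGB S S) : Prop :=
  #|V G 0| = 1 /\ forall l (u : V G l.+1) w, Fw u w <-> Pw u w.

Section Canonical.
Variable Sigma : finType.
Variable L : zseq Sigma -> Prop.

Definition canEp (l : nat) (u : canV L l) (a : Sigma) (v : canV L l.+1) : Prop :=
  exists y, L y /\ y (Z.of_nat l) = a /\
    Wset L (-1) l y = val u /\ Wset L (-1) l.+1 y = val v.

(* edge v --beta--> u in E^-_{l+1,l}; theta_{l+1}([y]_{-(l+1),1}) = [sigma^{-l} y]_{-1,l+1}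
   and theta_l([y]_{-l,1}) = [sigma^{1-l} y]_{-1,l} *)
Definition canEm (l : nat) (v : canV L l.+1) (b : Sigma) (u : canV L l) : Prop :=
  exists y, L y /\ y (- Z.of_nat l)%Z = b /\
    Wset L (-1) l.+1 (shiftZ (- Z.of_nat l) y) = val v /\
    Wset L (-1) l (shiftZ (1 - Z.of_nat l) y) = val u.

Definition canonical_pair : LGB Sigma Sigma := mkLGB canEm canEp.
End Canonical.

From Pilot Require Import Defs.
From Stdlib Require Import ZArith ClassicalEpsilon ProofIrrelevance Lia.
From mathcomp Require Import all_boot zify.
Set Implicit Arguments. Unset Strict Implicit. Unset Printing Implicit Defensive.

(* A vertex u of V_l is a class [x]_{-1,l}, represented by the
   set W_{-1,l}(x) of words of length l that can be spliced into x at positions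
   0..l-1; we read u as this language of words.  The whole proof rests on two
   residual characterisations of the edges:
     u --a--> v in E^+  iff  v has a word ending in a and u = {s | s a in v},
     v --b--> u in E^-  iff  v has a word starting with b and u = {s | b s in v}.
   From them: both labelings are resolving (a residual is determined by v and
   its letter); every vertex has all required in/out edges (shift a
   representative); V_0 = {{[::]}}; F(u) = P(u) = the language of u, by
   peeling letters off either end (FPCC); and a local pair through u and v
   with labels (b, a) exists on either side iff u = {s | b s a in v}, so the
   two sides of the local property are in key-preserving bijection.  Finally a
   path labelled w in L^+ (resp. L^-) exists iff w can be extended to a word of
   some vertex, i.e. iff w is admissible. *)

Lemma classbP (P : Prop) : classb P = true <-> P.
Proof. rewrite /classb; case: excluded_middle_informative => //. Qed.

Lemma bijection_of_keys (A B K : Type) (kA : A -> K) (kB : B -> K) :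
  injective kA -> injective kB ->
  (forall a, exists b, kB b = kA a) -> (forall b, exists a, kA a = kB b) ->
  exists phi : A -> B, bijective phi /\ forall a, kB (phi a) = kA a.
Proof.
move=> injA injB AB BA.
pose phi a := proj1_sig (constructive_indefinite_description _ (AB a)).
pose psi b := proj1_sig (constructive_indefinite_description _ (BA b)).
have phiK a : kB (phi a) = kA a by rewrite /phi; case: constructive_indefinite_description.
have psiK b : kA (psi b) = kB b by rewrite /psi; case: constructive_indefinite_description.
exists phi; split=> //; exists psi => [a | b]; [apply: injA | apply: injB];
  by rewrite ?psiK ?phiK.
Qed.

Section CanonicalPair.
Variable Sigma : finType.
Variable L : zseq Sigma -> Prop.
Hypothesis HL : is_subshift L.

Lemma subshift_ext x y : L x -> (forall n, x n = y n) -> L y.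
Proof. move=> Lx e; case: HL => _ [Hc _]; apply: Hc => N; exists x; split=> // n _; exact: e. Qed.

Lemma subshift_shift1 x : L x -> L (shiftZ 1 x).
Proof. case: HL => _ [_ [H _]]; exact: H. Qed.

Lemma subshift_unshift1 x : L x -> L (shiftZ (-1) x).
Proof.
case: HL => _ [_ [_ H]] Lx; have [z [Lz e]] := H _ Lx.
apply: (subshift_ext Lz) => n; rewrite -e /shift /shiftZ; congr z; lia.
Qed.

Lemma subshift_shiftZ m x : L x -> L (shiftZ m x).
Proof.
move=> Lx.
have Hk (k : nat) : L (shiftZ (Z.of_nat k) x) /\ L (shiftZ (- Z.of_nat k) x).
  elim: k => [|k [IHp IHn]].
    by split; apply: (subshift_ext Lx) => n; rewrite /shiftZ; congr x; lia.
  split; [apply: (subshift_ext (subshift_shift1 IHp)) | apply: (subshift_ext (subshift_unshift1 IHn))];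
    by move=> n; rewrite /shiftZ; congr x; lia.
have [k [-> | ->]] : exists k : nat, m = Z.of_nat k \/ m = (- Z.of_nat k)%Z by exists (Z.abs_nat m); lia.
- exact: (Hk k).1.
- exact: (Hk k).2.
Qed.

Definition splice (x : zseq Sigma) (s : seq Sigma) : zseq Sigma :=
  fun m => if (0 <=? m)%Z && (m <? Z.of_nat (size s))%Z then nth (x m) s (Z.to_nat m) else x m.

Lemma fillZ_splice n x (t : n.-tuple Sigma) m : fillZ x (-1) t m = splice x t m.
Proof.
rewrite /fillZ /splice size_tuple.
case: (Z.ltb_spec (-1) m) => h1; case: (Z.ltb_spec m _) => h2;
case: (Z.leb_spec 0 m) => h3; case: (Z.ltb_spec m (Z.of_nat n)) => h4 //=; try lia.
congr nth; lia.
Qed.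

Lemma splice_out x s m : (m < 0 \/ Z.of_nat (size s) <= m)%Z -> splice x s m = x m.
Proof. rewrite /splice => h; case: (Z.leb_spec 0 m) => h3; case: (Z.ltb_spec m _) => h4 //=; lia. Qed.

Lemma splice_in x s (i : nat) d : i < size s -> splice x s (Z.of_nat i) = nth d s i.
Proof.
rewrite /splice => h; case: (Z.leb_spec 0 _) => h3; case: (Z.ltb_spec _ _) => h4 //=; try lia.
rewrite Nat2Z.id; exact: set_nth_default.
Qed.

Definition Wcan n x := Wset L (-1) n x.

Definition has_word n (S : {set n.-tuple Sigma}) (s : seq Sigma) : Prop :=
  exists t, t \in S /\ val t = s.

Lemma has_word_size n (S : {set n.-tuple Sigma}) s : has_word S s -> size s = n.
Proof. by case=> t [_ <-]; exact: size_tuple. Qed.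

Lemma has_word_ext n (S1 S2 : {set n.-tuple Sigma}) :
  (forall s, has_word S1 s <-> has_word S2 s) -> S1 = S2.
Proof.
move=> H; apply/setP => t; apply/idP/idP => h.
  by have [t' [h' /val_inj <-]] := proj1 (H (val t)) (ex_intro _ t (conj h erefl)).
by have [t' [h' /val_inj <-]] := proj2 (H (val t)) (ex_intro _ t (conj h erefl)).
Qed.

Lemma has_word_Wcan n x s : has_word (Wcan n x) s <-> size s = n /\ L (splice x s).
Proof.
split.
  case=> t [+ <-]; rewrite inE => /classbP Lt; split; first exact: size_tuple.
  by apply: (subshift_ext Lt) => m; exact: fillZ_splice.
case=> hs Ls; have hs' : size s == n by apply/eqP.
exists (Tuple hs'); split=> //; rewrite inE; apply/classbP.
by apply: (subshift_ext Ls) => m; rewrite fillZ_splice.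
Qed.

Lemma Wcan_agree n x y :
  (forall m, (m < 0 \/ Z.of_nat n <= m)%Z -> x m = y m) -> Wcan n x = Wcan n y.
Proof.
move=> e; apply: has_word_ext => s; rewrite !has_word_Wcan.
have e' : size s = n -> forall m, splice x s m = splice y s m.
  move=> hs m; rewrite /splice; case: (Z.leb_spec 0 m) => h3; case: (Z.ltb_spec m _) => h4 /=;
    try (apply: e; lia).
  apply: set_nth_default; lia.
by split=> -[hs Ls]; split=> //; apply: (subshift_ext Ls) => m; rewrite e'.
Qed.

Lemma Wcan_ext n x y : (forall m, x m = y m) -> Wcan n x = Wcan n y.
Proof. by move=> e; apply: Wcan_agree => m _. Qed.

Definition window (x : zseq Sigma) n := mkseq (fun i => x (Z.of_nat i)) n.

Lemma Wcan_window n x : L x -> has_word (Wcan n x) (window x n).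
Proof.
move=> Lx; apply/has_word_Wcan; split; first by rewrite size_mkseq.
apply: (subshift_ext Lx) => m; rewrite /splice size_mkseq.
case: (Z.leb_spec 0 m) => h3; case: (Z.ltb_spec m _) => h4 //=.
rewrite nth_mkseq; last lia.
by congr x; lia.
Qed.

Lemma Wcan_rcons l x s :
  has_word (Wcan l x) s <-> has_word (Wcan l.+1 x) (rcons s (x (Z.of_nat l))).
Proof.
rewrite !has_word_Wcan size_rcons.
have e : size s = l -> forall m, splice x s m = splice x (rcons s (x (Z.of_nat l))) m.
  move=> hs m; rewrite /splice size_rcons nth_rcons.
  case: (Z.leb_spec 0 m) => h3; case: (Z.ltb_spec m (Z.of_nat (size s))) => h4;
  case: (Z.ltb_spec m (Z.of_nat (size s).+1)) => h5 //=; try lia.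
    by case: ltnP => h6; last lia.
  case: ltnP => h6; first lia.
  by rewrite ifT; [congr x; lia | apply/eqP; lia].
by split=> -[hs Ls]; (split; first lia); apply: (subshift_ext Ls) => m; rewrite e //; lia.
Qed.

Lemma Wcan_cons l x s : L x ->
  has_word (Wcan l (shiftZ 1 x)) s <-> has_word (Wcan l.+1 x) (x 0%Z :: s).
Proof.
move=> Lx; rewrite !has_word_Wcan /=.
have e m : shiftZ 1 (splice x (x 0%Z :: s)) m = splice (shiftZ 1 x) s m.
  rewrite /splice /shiftZ /=.
  case: (Z.leb_spec 0 m) => h3; case: (Z.ltb_spec m (Z.of_nat (size s))) => h4;
  case: (Z.leb_spec 0 (m+1)) => h5; case: (Z.ltb_spec (m+1) (Z.of_nat (size s).+1)) => h6 //=;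
    try lia.
    by have -> : Z.to_nat (m + 1) = (Z.to_nat m).+1 by lia.
  by have -> : m = (-1)%Z by lia.
split=> -[hs Ls]; (split; first lia).
  apply: (subshift_ext (subshift_shiftZ (-1) Ls)) => m.
  by have := e (m + -1)%Z; rewrite /shiftZ => <-; congr splice; lia.
by apply: (subshift_ext (subshift_shiftZ 1 Ls)) => m; rewrite e.
Qed.

Definition vertex l x (Lx : L x) : canV L l :=
  @exist _ _ (Wcan l x) (proj2 (classbP _) (ex_intro _ x (conj Lx erefl))).

Lemma vertex_rep l (u : canV L l) : exists x, L x /\ Wcan l x = val u.
Proof. by have /classbP := valP u. Qed.

Definition lang l (u : canV L l) (s : seq Sigma) : Prop := has_word (val u) s.

Lemma lang_inj l (u1 u2 : canV L l) : (forall s, lang u1 s <-> lang u2 s) -> u1 = u2.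
Proof. by move=> H; apply: val_inj; apply: has_word_ext. Qed.

Lemma canEp_intro l x (u : canV L l) (v : canV L l.+1) :
  L x -> val u = Wcan l x -> val v = Wcan l.+1 x -> canEp u (x (Z.of_nat l)) v.
Proof. by move=> Lx hu hv; exists x. Qed.

Lemma canEm_intro l x (v : canV L l.+1) (u : canV L l) :
  L x -> val v = Wcan l.+1 x -> val u = Wcan l (shiftZ 1 x) -> canEm v (x 0%Z) u.
Proof.
move=> Lx hv hu; exists (shiftZ (Z.of_nat l) x); split; first exact: subshift_shiftZ.
split; first by rewrite /shiftZ; congr x; lia.
by split; [rewrite hv | rewrite hu]; apply: Wcan_ext => m; rewrite /shiftZ; congr x; lia.
Qed.

Lemma canEp_residual l (u : canV L l) a (v : canV L l.+1) : canEp u a v ->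
  (exists s, lang v (rcons s a)) /\ (forall s, lang u s <-> lang v (rcons s a)).
Proof.
case=> y [Ly [<- [Wu Wv]]]; rewrite /lang -Wu -Wv; split; last by move=> s; exact: Wcan_rcons.
by exists (window y l); apply: (proj1 (Wcan_rcons _ _ _)); exact: Wcan_window.
Qed.

Lemma canEm_residual l (v : canV L l.+1) b (u : canV L l) : canEm v b u ->
  (exists s, lang v (b :: s)) /\ (forall s, lang u s <-> lang v (b :: s)).
Proof.
case=> y [Ly [yb [Wv Wu]]]; set x := shiftZ (- Z.of_nat l) y.
have Lx : L x by exact: subshift_shiftZ.
have ex m : shiftZ (1 - Z.of_nat l) y m = shiftZ 1 x m by rewrite /x /shiftZ; congr y; lia.
have xb : x 0%Z = b by rewrite -yb /x /shiftZ; congr y; lia.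
rewrite /lang -Wv -Wu -/(Wcan l.+1 _) -/(Wcan l _) (Wcan_ext _ ex) -xb.
split; last by move=> s; exact: Wcan_cons.
by exists (window (shiftZ 1 x) l); apply/Wcan_cons => //; apply: Wcan_window; exact: subshift_shiftZ.
Qed.

Lemma canEp_exists l (v : canV L l.+1) s a : lang v (rcons s a) -> exists u, canEp u a v.
Proof.
have [x [Lx Wx]] := vertex_rep v; rewrite /lang -Wx.
case/has_word_Wcan; rewrite size_rcons => -[hs] Ly.
exists (vertex l Ly).
have ha : splice x (rcons s a) (Z.of_nat l) = a.
  by rewrite (splice_in _ a) ?size_rcons ?hs // nth_rcons hs ltnn eqxx.
have := @canEp_intro l _ (vertex l Ly) v Ly erefl; rewrite ha; apply.
rewrite -Wx; apply: Wcan_agree => m hm; rewrite splice_out // size_rcons; lia.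
Qed.

Lemma canEm_exists l (v : canV L l.+1) b s : lang v (b :: s) -> exists u, canEm v b u.
Proof.
have [x [Lx Wx]] := vertex_rep v; rewrite /lang -Wx; case/has_word_Wcan => hs Ly.
exists (vertex l (subshift_shift1 Ly)).
have hb : splice x (b :: s) 0%Z = b by rewrite (@splice_in x _ 0 b).
have := @canEm_intro l _ v (vertex l (subshift_shift1 Ly)) Ly; rewrite hb; apply=> //.
rewrite -Wx; apply: Wcan_agree => m hm; rewrite splice_out //; lia.
Qed.

Lemma canEp_iff l (u : canV L l) a (v : canV L l.+1) : canEp u a v <->
  (exists s, lang v (rcons s a)) /\ (forall s, lang u s <-> lang v (rcons s a)).
Proof.
split; first exact: canEp_residual.
case=> -[s hs] H; have [u' Hu'] := canEp_exists hs.
suff -> : u = u' by [].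
by apply: lang_inj => s'; rewrite H (canEp_residual Hu').2.
Qed.

Lemma canEm_iff l (v : canV L l.+1) b (u : canV L l) : canEm v b u <->
  (exists s, lang v (b :: s)) /\ (forall s, lang u s <-> lang v (b :: s)).
Proof.
split; first exact: canEm_residual.
case=> -[s hs] H; have [u' Hu'] := canEm_exists hs.
suff -> : u = u' by [].
by apply: lang_inj => s'; rewrite H (canEm_residual Hu').2.
Qed.

Lemma canEm_resolving l (v : canV L l.+1) b (u1 u2 : canV L l) :
  canEm v b u1 -> canEm v b u2 -> u1 = u2.
Proof. by move=> /canEm_residual [_ H1] /canEm_residual [_ H2]; apply: lang_inj => s; rewrite H1 H2. Qed.

Lemma canEp_resolving l (v : canV L l.+1) a (u1 u2 : canV L l) :
  canEp u1 a v -> canEp u2 a v -> u1 = u2.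
Proof. by move=> /canEp_residual [_ H1] /canEp_residual [_ H2]; apply: lang_inj => s; rewrite H1 H2. Qed.

Lemma canEm_in l (v : canV L l) : exists (w : canV L l.+1) b, canEm w b v.
Proof.
have [x [Lx Wx]] := vertex_rep v; have Lx' := subshift_unshift1 Lx.
exists (vertex l.+1 Lx'), (shiftZ (-1) x 0%Z); apply: canEm_intro => //.
by rewrite -Wx; apply: Wcan_ext => m; rewrite /shiftZ; congr x; lia.
Qed.

Lemma canEm_out l (v : canV L l.+1) : exists b (u : canV L l), canEm v b u.
Proof.
have [x [Lx Wx]] := vertex_rep v.
by exists (x 0%Z), (vertex l (subshift_shift1 Lx)); apply: canEm_intro.
Qed.

Lemma canEp_out l (v : canV L l) : exists a (w : canV L l.+1), canEp v a w.
Proof.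
have [x [Lx Wx]] := vertex_rep v.
by exists (x (Z.of_nat l)), (vertex l.+1 Lx); apply: canEp_intro.
Qed.

Lemma canEp_in l (v : canV L l.+1) : exists (u : canV L l) a, canEp u a v.
Proof.
have [x [Lx Wx]] := vertex_rep v.
by exists (vertex l Lx), (x (Z.of_nat l)); apply: canEp_intro.
Qed.

Lemma lang_V0 (u : canV L 0) s : lang u s <-> s = [::].
Proof.
have [x [Lx Wx]] := vertex_rep u; rewrite /lang -Wx has_word_Wcan.
split; first by case=> /size0nil.
by move=> ->; split=> //; apply: (subshift_ext Lx) => m; rewrite splice_out //=; lia.
Qed.

Lemma V0_unique (u1 u2 : canV L 0) : u1 = u2.
Proof. by apply: lang_inj => s; rewrite !lang_V0. Qed.

Lemma Fw_lang l (u : canV L l) w : @Fw _ _ (canonical_pair L) l u w <-> lang u w.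
Proof.
elim: l u w => [|l IH] u w /=; first by rewrite lang_V0.
split.
  by case=> b [u' [w' [/canEm_residual [_ Hu] [/IH Hf ->]]]]; apply/Hu.
case: w => [|b w'] hw; first by have := has_word_size hw.
have [u' He] := canEm_exists hw; exists b, u', w'; split=> //; split=> //.
by apply/IH; apply/(canEm_residual He).2.
Qed.

Lemma Pw_lang l (u : canV L l) w : @Pw _ _ (canonical_pair L) l u w <-> lang u w.
Proof.
elim: l u w => [|l IH] u w /=; first by rewrite lang_V0.
split.
  by case=> u' [a [w' [/canEp_residual [_ Hu] [/IH Hf ->]]]]; apply/Hu.
case/lastP: w => [|w' a] hw; first by have := has_word_size hw.
have [u' He] := canEp_exists hw; exists u', a, w'; split=> //; split=> //.
by apply/IH; apply/(canEp_residual He).2.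
Qed.

Section LocalProperty.
Variables (l : nat) (u : canV L l) (v : canV L l.+2).

(* The common description of both kinds of local pairs with labels (b, a):
   u is the two-sided residual {s | b s a in v}, and it is realised. *)
Definition two_sided_residual b a : Prop :=
  (exists s, lang v (b :: rcons s a)) /\ (forall s, lang u s <-> lang v (b :: rcons s a)).

Lemma left_pair_residual (w : canV L l.+1) b a :
  canEm w b u -> canEp w a v -> two_sided_residual b a.
Proof.
move=> /canEm_residual [[s0 h0] Hu] /canEp_residual [_ Hw]; split.
  by exists s0; apply/(Hw (b :: s0)).
by move=> s; rewrite Hu Hw.
Qed.

Lemma right_pair_residual (w : canV L l.+1) b a :
  canEp u a w -> canEm v b w -> two_sided_residual b a.
Proof.
move=> /canEp_residual [[s0 h0] Hu] /canEm_residual [_ Hw]; split.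
  by exists s0; apply/(Hw (rcons s0 a)).
by move=> s; rewrite Hu Hw.
Qed.

Lemma residual_left_pair b a :
  two_sided_residual b a -> exists w : canV L l.+1, canEm w b u /\ canEp w a v.
Proof.
case=> -[s0 h0] H; have [w He] := @canEp_exists l.+1 v (b :: s0) a h0.
have [_ Hw] := canEp_residual He; exists w; split=> //.
apply/canEm_iff; split; first by exists s0; apply/Hw.
by move=> s; rewrite H Hw.
Qed.

Lemma residual_right_pair b a :
  two_sided_residual b a -> exists w : canV L l.+1, canEp u a w /\ canEm v b w.
Proof.
case=> -[s0 h0] H; have [w He] := @canEm_exists l.+1 v b (rcons s0 a) h0.
have [_ Hw] := canEm_residual He; exists w; split=> //.
apply/canEp_iff; split; first by exists s0; apply/Hw.
by move=> s; rewrite H Hw.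
Qed.

Notation left_pairs := (@local_pairs_L _ _ (canonical_pair L) l u v).
Notation right_pairs := (@local_pairs_R _ _ (canonical_pair L) l u v).

(* By resolvingness a local pair is determined by its two labels. *)
Definition left_key (p : left_pairs) : Sigma * Sigma := ((proj1_sig p).1.2, (proj1_sig p).2).
Definition right_key (q : right_pairs) : Sigma * Sigma := ((proj1_sig q).2, (proj1_sig q).1.2).

Lemma left_key_inj : injective left_key.
Proof.
move=> [[[w1 b1] a1] [h1 h1']] [[[w2 b2] a2] [h2 h2']] [/= eb ea]; subst b2 a2.
have /= ew := canEp_resolving h1' h2'; subst w2.
by f_equal; apply: proof_irrelevance.
Qed.

Lemma right_key_inj : injective right_key.
Proof.
move=> [[[w1 a1] b1] [h1 h1']] [[[w2 a2] b2] [h2 h2']] [/= eb ea]; subst b2 a2.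
have /= ew := canEm_resolving h1' h2'; subst w2.
by f_equal; apply: proof_irrelevance.
Qed.

Lemma local_property : exists phi : left_pairs -> right_pairs, bijective phi /\
  forall p, (proj1_sig (phi p)).2 = (proj1_sig p).1.2 /\ (proj1_sig (phi p)).1.2 = (proj1_sig p).2.
Proof.
have [phi [bij_phi Hkey]] : exists phi : left_pairs -> right_pairs,
    bijective phi /\ forall p, right_key (phi p) = left_key p.
  apply: bijection_of_keys; [exact: left_key_inj | exact: right_key_inj | |].
  - move=> [[[w b] a] /= [h1 h2]].
    have [w' [e1 e2]] := residual_right_pair (left_pair_residual h1 h2).
    by exists (exist _ (w', a, b) (conj e1 e2)).
  - move=> [[[w a] b] /= [h1 h2]].
    have [w' [e1 e2]] := residual_left_pair (right_pair_residual h1 h2).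
    by exists (exist _ (w', b, a) (conj e1 e2)).
by exists phi; split=> // p; case: (Hkey p).
Qed.
End LocalProperty.

Lemma canonical_is_lambda_graph_bisystem : is_lambda_graph_bisystem (canonical_pair L).
Proof.
have [[x0 Lx0] _] := HL.
split; first by move=> l; exists (vertex l Lx0).
split; first by move=> l v; split; [exact: canEm_in | split; [exact: canEm_out |
  split; [exact: canEp_out | exact: canEp_in]]].
split; first by move=> v; split; [exact: canEm_in | exact: canEp_out].
split; first exact: canEm_resolving.
split; first exact: canEp_resolving.
exact: local_property.
Qed.

Lemma canonical_FPCC : FPCC (canonical_pair L).
Proof.
have [[x0 Lx0] _] := HL; split.
  by apply: (@eq_card1 _ (vertex 0 Lx0)) => u; rewrite !inE; apply/esym/eqP; exact: V0_unique.
by move=> l u w; rewrite Fw_lang Pw_lang.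
Qed.

Lemma pathP_residual w l (u : canV L l) : @Defs.pathP _ _ (canonical_pair L) w l u ->
  exists n (v : canV L n), forall s, lang u s <-> lang v (s ++ w).
Proof.
elim: w l u => [|a w IH] l u /=; first by move=> _; exists l, u => s; rewrite cats0.
case=> v [/canEp_residual [_ Hu] /IH [n [v' H]]]; exists n, v' => s.
by rewrite Hu H cat_rcons.
Qed.

Lemma pathM_residual w l (u : canV L l) : @pathM _ _ (canonical_pair L) w l u ->
  exists n (v : canV L n), forall s, lang v s <-> lang u (w ++ s).
Proof.
elim: w l u => [|b w IH] l u /=; first by move=> _; exists l, u.
case: l u => [|l] u //=.
case=> v [/canEm_residual [_ Hu] /IH [n [v' H]]]; exists n, v' => s.
by rewrite H Hu.
Qed.

Lemma pathP_of_point w k z (Lz : L z) :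
  (forall i, i < size w -> z (Z.of_nat (k + i)) = nth (z 0%Z) w i) ->
  @Defs.pathP _ _ (canonical_pair L) w k (vertex k Lz).
Proof.
elim: w k => [|a w IH] k //= h; exists (vertex k.+1 Lz); split.
  have <- : z (Z.of_nat k) = a by have := h 0 erefl; rewrite addn0.
  exact: canEp_intro.
by apply: IH => i hi; rewrite addSnnS (h i.+1).
Qed.

Lemma pathM_of_point w z (Lz : L z) :
  (forall i, i < size w -> z (Z.of_nat i) = nth (z 0%Z) w i) ->
  @pathM _ _ (canonical_pair L) w (size w) (vertex (size w) Lz).
Proof.
elim: w z Lz => [|b w IH] z Lz h //=; exists (vertex (size w) (subshift_shift1 Lz)); split.
  have <- : z 0%Z = b by have := h 0 erefl.
  exact: canEm_intro.
apply: IH => i hi; rewrite /shiftZ.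
have -> : (Z.of_nat i + 1)%Z = Z.of_nat i.+1 by lia.
by rewrite (h i.+1) //=; exact: set_nth_default.
Qed.

Lemma admissible_of_lang n (v : canV L n) s1 w s2 :
  w <> [::] -> lang v (s1 ++ w ++ s2) -> admissible L w.
Proof.
move=> hne; have [z [Lz Wz]] := vertex_rep v; rewrite /lang -Wz => /has_word_Wcan [_ Ly].
split=> //; exists (splice z (s1 ++ w ++ s2)); split=> //.
exists (Z.of_nat (size s1)) => i hi.
rewrite -Nat2Z.inj_add (splice_in _ (splice z (s1 ++ w ++ s2) (Z.of_nat (size s1)))); last first.
  by rewrite !size_cat; lia.
by rewrite nth_cat ltnNge leq_addr /= addKn nth_cat hi.
Qed.

Lemma W_Lp_admissible w : W_Lp (canonical_pair L) w <-> admissible L w.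
Proof.
split.
  case=> hne [l [u /pathP_residual [n [v H]]]].
  have [x [Lx Wx]] := vertex_rep u.
  have hs : lang u (window x l) by rewrite /lang -Wx; exact: Wcan_window.
  by apply: (@admissible_of_lang n v (window x l) w [::]) => //; rewrite cats0; apply/H.
case=> hne [x [Lx [n h]]]; split=> //.
exists 0, (vertex 0 (subshift_shiftZ n Lx)); apply: pathP_of_point => i hi.
by rewrite /shiftZ add0n Z.add_comm h //; exact: set_nth_default.
Qed.

Lemma W_Lm_admissible w : W_Lm (canonical_pair L) w <-> admissible L w.
Proof.
split.
  case=> hne [l [u /pathM_residual [n [v H]]]].
  have [x [Lx Wx]] := vertex_rep v.
  have hs : lang v (window x n) by rewrite /lang -Wx; exact: Wcan_window.
  by apply: (@admissible_of_lang l u [::] w (window x n)) => //; apply/H.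
case=> hne [x [Lx [n h]]]; split=> //.
exists (size w), (vertex (size w) (subshift_shiftZ n Lx)); apply: pathM_of_point => i hi.
by rewrite /shiftZ Z.add_comm h //; exact: set_nth_default.
Qed.

End CanonicalPair.

Theorem proposition5p4 (Sigma : finType) (L : zseq Sigma -> Prop) :
  is_subshift L ->
  is_lambda_graph_bisystem (canonical_pair L) /\
  FPCC (canonical_pair L) /\
  (forall w : seq Sigma, W_Lp (canonical_pair L) w <-> admissible L w) /\
  (forall w : seq Sigma, W_Lm (canonical_pair L) w <-> admissible L w).
Proof.
move=> HL; split; first exact: canonical_is_lambda_graph_bisystem.
split; first exact: canonical_FPCC.
by split=> w; [exact: W_Lp_admissible | exact: W_Lm_admissible].
Qed.
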